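(* For every election, every candidate that \textsc{PluralityMatching} may return (i.e.\ every candidate $a$ whose integral domination graph $G(a)$ admits a perfect matching) lies in the matching uncovered set. Consequently, the matching uncovered set of every election is non-empty.
   Context: An election: voters $V$ (finite, nonempty), candidates $C$ (finite, nonempty), a profile of linear orders $\sigma_i$ over $C$; $a\succeq_i c$ means $a=c$ or $i$ ranks $a$ above $c$; $\mathrm{top}(i)$ is $i$'s first choice. The integral domination graph $G(a)$ is the bipartite graph with both sides copies of $V$ and edge $(i,j)$ iff $a\succeq_i\mathrm{top}(j)$. The separation graph $G(a,b)$ of candidates $a,b$ is the bipartite graph with both sides copies of $V$ and edge $(i,j)$ iff there exists $c\in C$ with $a\succeq_i c$ and $c\succeq_j b$. The matching uncovered set is the set of candidates $a$ such that for every $b\in C$, $G(a,b)$ admits a perfect matching. \textsc{PluralityMatching} returns an arbitrary candidate $a$ whose $G(a)$ admits a perfect matching. *)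

From mathcomp Require Import all_boot all_order all_fingroup.
Set Implicit Arguments. Unset Strict Implicit. Unset Printing Implicit Defensive.

(* A profile: for every voter i, a strict linear order [pref i] over C
   ([pref i a b] means voter i ranks a strictly above b). *)
Record profile (V C : finType) := Profile {
  pref : V -> rel C;
  pref_irrefl : forall i a, ~~ pref i a a;
  pref_trans : forall i a b c, pref i a b -> pref i b c -> pref i a c;
  pref_total : forall i a b, a != b -> pref i a b || pref i b a
}.

Section Election.
Variables (V C : finType) (P : profile V C).

Definition wpref (i : V) (a c : C) : bool := (a == c) || pref P i a c.

(* top(i): voter i's first choice (Some c with c weakly preferred to every d;
   it always exists when C is nonempty). *)
Definition top (i : V) : option C := [pick c | [forall d, wpref i c d]].

(* Bipartite graphs with both sides copies of V, given by their edge relation;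
   a perfect matching is a bijection f : V -> V with every (i, f i) an edge. *)
Definition has_perfect_matching (G : V -> V -> bool) : Prop :=
  exists f : {perm V}, forall i, G i (f i).

Definition dom_graph (a : C) (i j : V) : bool :=
  if top j is Some t then wpref i a t else false.

Definition sep_graph (a b : C) (i j : V) : bool :=
  [exists c, wpref i a c && wpref j c b].

Definition matching_uncovered (a : C) : Prop :=
  forall b : C, has_perfect_matching (sep_graph a b).

End Election.

From mathcomp Require Import all_boot all_order all_fingroup.
Set Implicit Arguments. Unset Strict Implicit. Unset Printing Implicit Defensive.

(* A perfect matching f of G(a) pairs every voter i with a voter f i such that
   a >=_i top(f i) >=_(f i) b for every b, so it is also a perfect matching of
   every separation graph G(a, b).  Such an a exists by a veto procedure: voter
   after voter, each is matched with the remaining voter whose top it ranks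
   lowest, and a is the top of the voter left at the end; every voter weakly
   prefers a to the top it vetoed. *)

Lemma exists_strict_total_max (T : finType) (r : rel T) (A : {set T}) :
  irreflexive r -> transitive r -> (forall x y, x != y -> r x y || r y x) ->
  A != set0 -> exists2 c, c \in A & {in A, forall d, (c == d) || r c d}.
Proof.
move=> irr tr tot /set0Pn [c0 c0A].
have [c cA cmin] := arg_minnP (fun c => #|[set d in A | r d c]|) c0A.
exists c => // d dA; case: eqVneq => //= ncd.
case/orP: (tot c d ncd) => // rdc.
have := cmin d dA; rewrite leqNgt => /negP; case.
apply: proper_card; apply/properP; split.
  by apply/subsetP => x; rewrite !inE => /andP [-> /= rxd]; apply: tr rdc.
by exists d; rewrite !inE ?dA ?rdc //= irr.
Qed.

Lemma extend_injective_in (T : finType) (f : T -> T) (S U : {set T}) i j :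
  {in S :\ i &, injective f} -> {in S :\ i, forall x, f x \in U :\ j} ->
  {in S &, injective (fun x => if x == i then j else f x)}.
Proof.
move=> finj fU x y xS yS /=.
have fj z : z \in S -> z != i -> f z != j.
  by move=> zS zi; have := fU z; rewrite !inE zi zS => /(_ isT) /andP [].
case: (eqVneq x i) => [->|xi]; case: (eqVneq y i) => [->|yi] //.
- by move=> ejf; move: (fj y yS yi); rewrite -ejf eqxx.
- by move=> efj; move: (fj x xS xi); rewrite efj eqxx.
- by apply: finj; rewrite !inE ?xi ?yi.
Qed.

Section Election.
Variables (V C : finType) (P : profile V C).

Lemma exists_pref_best i (A : {set C}) :
  A != set0 -> exists2 c, c \in A & {in A, forall d, wpref P i c d}.
Proof.
move=> An0; apply: exists_strict_total_max An0 => [a|b a c ab bc|a b ab].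
- exact/negbTE/pref_irrefl.
- exact: pref_trans ab bc.
- exact: pref_total.
Qed.

Lemma exists_pref_worst i (A : {set C}) :
  A != set0 -> exists2 c, c \in A & {in A, forall d, wpref P i d c}.
Proof.
move=> An0; have [c cA cmin] : exists2 c, c \in A &
    {in A, forall d, (c == d) || pref P i d c}.
  apply: exists_strict_total_max An0 => [a|b a c ab bc|a b ab].
  - exact/negbTE/pref_irrefl.
  - exact: pref_trans bc ab.
  - by rewrite orbC pref_total.
by exists c => // d dA; rewrite /wpref eq_sym; apply: cmin.
Qed.

Lemma top_best i t : top P i = Some t -> forall d, wpref P i t d.
Proof. by rewrite /top; case: pickP => // c /forallP ct [<-]. Qed.

Lemma top_exists i : 0 < #|C| -> exists t, top P i = Some t.
Proof.
move=> /card_gt0P [c0 _]; rewrite /top; case: pickP => [t _|nobest]; first by exists t.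
have [|c _ cbest] := exists_pref_best i (A := [set: C]); first by apply/set0Pn; exists c0.
by move: (nobest c); rewrite (introT forallP) // => d; apply: cbest; rewrite inE.
Qed.

Lemma dom_graph_sub_sep_graph a b i j : dom_graph P a i j -> sep_graph P a b i j.
Proof.
rewrite /dom_graph; case ej: (top P j) => [t|] // ait.
by apply/existsP; exists t; rewrite ait (top_best ej).
Qed.

Lemma dom_matching_uncovered a :
  has_perfect_matching (dom_graph P a) -> matching_uncovered P a.
Proof. by move=> [f fdom] b; exists f => i; apply: dom_graph_sub_sep_graph. Qed.

Lemma veto_matching (tp : V -> C) n (S T : {set V}) :
  #|S| = n.+1 -> #|T| = n.+1 ->
  exists a, exists f : V -> V,
    [/\ a \in tp @: T, {in S &, injective f}, {in S, forall x, f x \in T} &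
        {in S, forall x, wpref P x a (tp (f x))}].
Proof.
elim: n S T => [|n IH] S T hS hT;
  have [i Si] : exists i, i \in S by apply/set0Pn; rewrite -card_gt0 hS.
- have [j Tj] : exists j, j \in T by apply/set0Pn; rewrite -card_gt0 hT.
  have eS : S = [set i] by apply/eqP; rewrite eq_sym eqEcard sub1set Si cards1 hS.
  exists (tp j), (fun=> j); split=> [|x y|//|x _]; last by rewrite /wpref eqxx.
  - exact: imset_f.
  - by rewrite eS !inE => /eqP -> /eqP ->.
have tpTn0 : tp @: T != set0 by rewrite imset_eq0 -card_gt0 hT.
have [_ /imsetP [j Tj ->] jworst] := exists_pref_worst i tpTn0.
have hS' : #|S :\ i| = n.+1 by move: hS; rewrite (cardsD1 i) Si => -[].
have hT' : #|T :\ j| = n.+1 by move: hT; rewrite (cardsD1 j) Tj => -[].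
have [a [f [aT finj fT fa]]] := IH _ _ hS' hT'.
have atpT : a \in tp @: T by apply: subsetP (imsetS tp (subD1set T j)) a aT.
exists a, (fun x => if x == i then j else f x); split=> //.
- exact: extend_injective_in finj fT.
- move=> x xS /=; case: (eqVneq x i) => // xi.
  by have := fT x; rewrite !inE xi xS => /(_ isT) /andP [].
- move=> x xS /=; case: (eqVneq x i) => [->|xi]; first exact: jworst.
  by apply: fa; rewrite !inE xi.
Qed.

Lemma exists_dom_matching :
  0 < #|V| -> 0 < #|C| -> exists a, has_perfect_matching (dom_graph P a).
Proof.
move=> hV hC; have /card_gt0P [c0 _] := hC.
pose tp j := odflt c0 (top P j).
have top_tp j : top P j = Some (tp j) by rewrite /tp; case: (top_exists j hC) => t ->.
have hVT : #|[set: V]| = #|V|.-1.+1 by rewrite cardsT prednK.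
have [a [f [_ finj _ fa]]] := veto_matching tp hVT hVT.
have finj' : injective f by move=> x y; apply: finj; rewrite inE.
exists a, (perm finj') => i.
by rewrite permE /dom_graph top_tp; apply: fa; rewrite inE.
Qed.

End Election.

Theorem proposition1 (V C : finType) (P : profile V C) :
  0 < #|V| -> 0 < #|C| ->
  (forall a : C, has_perfect_matching (dom_graph P a) -> matching_uncovered P a) /\
  (exists a : C, matching_uncovered P a).
Proof.
move=> hV hC; split=> [|]; first exact: dom_matching_uncovered.
have [a adom] := exists_dom_matching P hV hC.
by exists a; apply: dom_matching_uncovered.
Qed.
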